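(* Let $A$ be a $\mathbb{U}$-poset, $r,s\in\mathbb{I}$, $u,v\in\mathbb{U}$, $a,b,c\in A$. Then: (a) if $r\le s$ and $a\le_r b$ then $a\le_s b$; (b) $a\le_0 b$ iff $a\le b$; (c) if $a\le_r b$ and $b\le_s c$ then $a\le_{r\dotplus s}c$; (d) $\rho(a,a)=0$ and $\rho(a,b)+\rho(b,c)\ge\rho(a,c)$, so $\rho$ is a pseudoquasimetric and $\mathrm{dist}$ is a pseudometric; (e) if $u(t\dotplus r)\le v(t)\dotplus s$ for all $t\in\mathbb{I}$ and $a\le_r b$, then $u(a)\le_s v(b)$; consequently $\rho(u(a),v(a))\le\bigvee_{t\in\mathbb{I}}(u(t)\dotminus v(t))$, and if $\mu:\mathbb{I}\to\mathbb{I}$ satisfies $u(t)\dotminus u(t')\le\mu(t\dotminus t')$ for all $t,t'\in\mathbb{I}$, then $\rho(u(a),u(b))\le\mu(\rho(a,b))$ for all $a,b\in A$; (f) if $u^\times(t\dotplus r)\le v(t)\dotplus s$ for all $t\in\mathbb{I}$, where $u^\times$ is the right adjoint of $u$, and $u(a)\le_r b$, then $a\le_s v(b)$. Moreover, if $A$ is a $\mathbb{U}$-$\Psi^{\mathrm{op}}$-inflattice, then (g) for every upper subset $\psi\subseteq A$ with $\psi^{\mathrm{op}}\in\Psi$ (so $\bigwedge\psi$ exists): $a\le_r\bigwedge\psi$ iff $a\le_r b$ for all $b\in\psi$; consequently for two such $\psi,\psi'$, $\rho(\bigwedge\psi,\bigwedge\psi')\le\bigwedge_{a\in\psi}\bigv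ee_{b\in\psi'}\rho(a,b)$.
   Context: $\mathbb{I}=[0,1]$; $\dotplus,\dotminus$ are truncated addition and subtraction on $\mathbb{I}$. $\mathbb{U}$ is the monoid of surjective monotone maps $\mathbb{I}\to\mathbb{I}$; for $u\in\mathbb{U}$, $u^\times(y)=\max\{x\mid u(x)\le y\}$ is its right adjoint. A $\mathbb{U}$-poset is a poset with a $\mathbb{U}$-action monotone in both variables. $a\le_r b$ iff for all $u,v\in\mathbb{U}$ with $u(t\dotplus r)\le v(t)$ for all $t$, $u(a)\le v(b)$; $\rho(a,b)=\bigwedge\{r\mid a\le_r b\}$; $\mathrm{dist}(a,b)=\rho(a,b)\vee\rho(b,a)$. Standing assumption: $\Phi,\Psi$ are join doctrines (classes of posets containing the one-element poset, closed under unions $\bigcup\mathcal{S}$ of sets $\mathcal{S}$ of subposets in the class with $\mathcal{S}$ (by inclusion) in the class, under codomains of monotone maps with cofinal image, and under cofinal subposets), $\omega\in\Phi$, and $\Phi$ is sound dual to $\Psi^{\mathrm{op}}$: for all posets $X,Y$, lower sets $\phi\subseteq Y$ in $\Phi$, lower sets $\psi\subseteq X$ in $\Psi$, and monotone $F:X^{\mathrm{op}}\times Y\to2$, $\bigwedge_{x\in\psi}\bigvee_{y\in\phi}F=\bigvee_{y\in\phi}\bigwedge_{x\in\psi}F$, and for every poset $X$ the lattice of lower sets of $X$ is the closure of the lower sets in $\Psi$ under unions of subfamilies belonging to $\Phi$. A $\Psi^{\mathrm{op}}$-meet is a meet of a subset $S$ with $S^{\mathrm{op}}\in\Psi$; a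 $\mathbb{U}$-$\Psi^{\mathrm{op}}$-inflattice is a $\mathbb{U}$-poset with all $\Psi^{\mathrm{op}}$-meets, each $u$ acting by a $\Psi^{\mathrm{op}}$-meet-preserving map. *)

From HB Require Import structures.
From mathcomp Require Import all_boot all_order all_algebra.
From mathcomp Require Import boolp classical_sets reals.
Set Implicit Arguments. Unset Strict Implicit. Unset Printing Implicit Defensive.
Import Order.TTheory GRing.Theory Num.Theory.
Local Open Scope ring_scope.
Local Open Scope classical_set_scope.

Section UnitInterval.
Variable R : realType.

Definition inI (x : R) : bool := (0 <= x) && (x <= 1).
Definition I := {x : R | inI x}.

Lemma clampI_proof (x : R) : inI (Num.min (Num.max x 0) 1).
Proof.
rewrite /inI; apply/andP; split.
- by rewrite le_min ler01 le_max lexx orbT.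
- by rewrite ge_min lexx orbT.
Qed.

Definition clampI (x : R) : I := @exist R (fun y => inI y) _ (clampI_proof x).

Definition I0 : I := clampI 0.
Definition tadd (x y : I) : I := clampI (sval x + sval y).
Definition tsub (x y : I) : I := clampI (sval x - sval y).

Record Umap := UMap {
  ufun :> I -> I;
  ufun_mono : forall x y : I, sval x <= sval y -> sval (ufun x) <= sval (ufun y);
  ufun_surj : forall y : I, exists x : I, ufun x = y }.

Definition idU : Umap := @UMap id (fun x y h => h) (fun y => ex_intro _ y erefl).

Lemma compU_mono (u v : Umap) (x y : I) :
  sval x <= sval y -> sval (u (v x)) <= sval (u (v y)).
Proof. by move=> h; apply: ufun_mono; apply: ufun_mono. Qed.

Lemma compU_surj (u v : Umap) (y : I) : exists x : I, u (v x) = y.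
Proof.
have [z <-] := ufun_surj u y; have [x <-] := ufun_surj v z; by exists x.
Qed.

Definition compU (u v : Umap) : Umap :=
  @UMap (fun t => u (v t)) (@compU_mono u v) (@compU_surj u v).

(* Supremum / infimum in the complete lattice I of a set of reals
   (empty sup = 0, empty inf = 1, the bottom/top of I). *)
Definition Isup (S : set R) : R := if pselect (S = set0) then 0 else sup S.
Definition Iinf (S : set R) : R := if pselect (S = set0) then 1 else inf S.

(* right adjoint u^x(y) = max {x | u(x) <= y} (this max exists; it is the sup) *)
Definition uadj (u : Umap) (y : I) : I :=
  clampI (sup [set sval x | x in [set x : I | sval (u x) <= sval y]]).

Section Posets.
Variables (A : Type) (le : A -> A -> Prop).

Definition is_poset : Prop :=
  (forall a, le a a) /\ (forall a b c, le a b -> le b c -> le a c) /\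
  (forall a b, le a b -> le b a -> a = b).

Definition is_lower (S : A -> Prop) : Prop := forall x y, le x y -> S y -> S x.
Definition is_upper (S : A -> Prop) : Prop := forall x y, le x y -> S x -> S y.

Definition is_glb (S : A -> Prop) (m : A) : Prop :=
  (forall x, S x -> le m x) /\ (forall y, (forall x, S x -> le y x) -> le y m).

Variable act : Umap -> A -> A.

Definition is_Uposet : Prop :=
  is_poset /\
  (forall a, act idU a = a) /\
  (forall u v a, act (compU u v) a = act u (act v a)) /\
  (forall (u v : Umap) a, (forall t, sval (u t) <= sval (v t)) -> le (act u a) (act v a)) /\
  (forall u a b, le a b -> le (act u a) (act u b)).

Definition le_r (r : I) (a b : A) : Prop :=
  forall u v : Umap, (forall t : I, sval (u (tadd t r)) <= sval (v t)) ->
    le (act u a) (act v b).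

Definition rho (a b : A) : I :=
  clampI (Iinf [set sval r | r in [set r : I | le_r r a b]]).

Definition dist (a b : A) : R := Num.max (sval (rho a b)) (sval (rho b a)).

End Posets.
End UnitInterval.

Definition PosetClass := forall T : Type, (T -> T -> Prop) -> Prop.

Definition subposet_in (K : PosetClass) (T : Type) (le : T -> T -> Prop)
  (S : T -> Prop) : Prop :=
  K {x : T | S x} (fun x y => le (proj1_sig x) (proj1_sig y)).

Definition opsubposet_in (K : PosetClass) (T : Type) (le : T -> T -> Prop)
  (S : T -> Prop) : Prop :=
  K {x : T | S x} (fun x y => le (proj1_sig y) (proj1_sig x)).

Definition family_in (K : PosetClass) (T : Type) (F : (T -> Prop) -> Prop) : Prop :=
  K {S : T -> Prop | F S} (fun S S' => forall x, proj1_sig S x -> proj1_sig S' x).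

Definition bigunion (T : Type) (F : (T -> Prop) -> Prop) : T -> Prop :=
  fun x => exists2 S, F S & S x.

Definition join_doctrine (K : PosetClass) : Prop :=
  K unit (fun _ _ => True) /\
  (forall (T : Type) (le : T -> T -> Prop) (F : (T -> Prop) -> Prop),
     is_poset le -> (forall S, F S -> subposet_in K le S) -> family_in K F ->
     subposet_in K le (bigunion F)) /\
  (forall (X Y : Type) (leX : X -> X -> Prop) (leY : Y -> Y -> Prop) (f : X -> Y),
     is_poset leX -> is_poset leY -> (forall x x', leX x x' -> leY (f x) (f x')) ->
     (forall y, exists x, leY y (f x)) -> K X leX -> K Y leY) /\
  (forall (T : Type) (le : T -> T -> Prop) (S : T -> Prop),
     is_poset le -> K T le -> (forall x, exists2 s, S s & le x s) ->
     subposet_in K le S).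

Definition sound_dual (Phi Psi : PosetClass) : Prop :=
  (forall (X Y : Type) (leX : X -> X -> Prop) (leY : Y -> Y -> Prop)
          (phi : Y -> Prop) (psi : X -> Prop) (F : X -> Y -> bool),
     is_poset leX -> is_poset leY ->
     is_lower leY phi -> subposet_in Phi leY phi ->
     is_lower leX psi -> subposet_in Psi leX psi ->
     (forall x x' y y', leX x' x -> leY y y' -> F x y -> F x' y') ->
     ((forall x, psi x -> exists2 y, phi y & F x y) <->
      (exists2 y, phi y & forall x, psi x -> F x y))) /\
  (* the lower sets of X form the closure of the Psi-lower sets under
     unions of subfamilies belonging to Phi *)
  (forall (X : Type) (leX : X -> X -> Prop), is_poset leX ->
     forall L, is_lower leX L ->
     forall C : (X -> Prop) -> Prop,
       (forall psi, is_lower leX psi -> subposet_in Psi leX psi -> C psi) ->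
       (forall F : (X -> Prop) -> Prop, (forall S, F S -> C S) ->
          family_in Phi F -> C (bigunion F)) ->
       C L).

Definition is_Uinflattice (R : realType) (Psi : PosetClass) (A : Type)
  (le : A -> A -> Prop) (act : Umap R -> A -> A) : Prop :=
  is_Uposet le act /\
  (forall S : A -> Prop, opsubposet_in Psi le S -> exists m, is_glb le S m) /\
  (forall (u : Umap R) (S : A -> Prop) (m : A), opsubposet_in Psi le S ->
     is_glb le S m -> is_glb le (fun y => exists2 x, S x & y = act u x) (act u m)).

From HB Require Import structures.
From mathcomp Require Import all_boot all_order all_algebra.
From mathcomp Require Import boolp classical_sets reals.
From mathcomp Require Import lra.
Import Order.TTheory GRing.Theory Num.Theory.
Local Open Scope ring_scope.
Local Open Scope classical_set_scope.
Set Implicit Arguments. Unset Strict Implicit. Unset Printing Implicit Defensive.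

(* Every element of U fixes 0 and 1, is uniformly continuous, and stays in U
   when precomposed with a truncated shift t |-> t (+) r or t |-> t (-) r, as long
   as the end points 0 and 1 are still reached.  Each part of the statement is a
   reparametrisation of the test pairs (u, v) defining a <=_r b; rho inherits
   these properties as the infimum of the admissible r, and (g) holds because
   every action preserves the meet. *)

Ltac minmax_lra :=
  repeat match goal with
  | |- context [Num.min ?a ?b] => case: (leP a b)
  | |- context [Num.max ?a ?b] => case: (leP a b)
  end; move=> *; lra.

Section TruncatedArithmetic.
Variable R : realType.
Implicit Types (p q r s t : I R) (x : R).

Lemma I_ge0 p : 0 <= sval p. Proof. by case: p => ? /= /andP[]. Qed.
Lemma I_le1 p : sval p <= 1. Proof. by case: p => ? /= /andP[]. Qed.

Lemma I_val_inj p q : sval p = sval q -> p = q.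
Proof. by case: p q => [p hp] [q hq] /= epq; subst; rewrite (bool_irrelevance hp hq). Qed.

Lemma clampI_id x : 0 <= x -> x <= 1 -> sval (clampI x) = x.
Proof. by move=> x0 x1; rewrite /= (max_idPl x0) (min_idPl x1). Qed.

Lemma clampI_le x : 0 <= x -> sval (clampI x) <= x.
Proof. by move=> x0; rewrite /= (max_idPl x0) ge_min lexx. Qed.

Lemma le_clampI y x : y <= 1 -> y <= x -> y <= sval (clampI x).
Proof. by move=> y1 yx; rewrite /= le_min y1 le_max yx. Qed.

Lemma I0_val : sval (I0 R) = 0. Proof. by rewrite clampI_id ?ler01. Qed.

Definition I1 : I R := clampI 1.
Lemma I1_val : sval I1 = 1. Proof. by rewrite clampI_id ?ler01. Qed.

Lemma tadd_val p q : sval (tadd p q) = Num.min (sval p + sval q) 1.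
Proof. by rewrite /= (max_idPl (addr_ge0 (I_ge0 p) (I_ge0 q))). Qed.

Lemma tsub_val p q : sval (tsub p q) = Num.max (sval p - sval q) 0.
Proof.
apply/min_idPl; rewrite ge_max ler01 andbT.
by have := I_le1 p; have := I_ge0 q; lra.
Qed.

Lemma taddr0 t : tadd t (I0 R) = t.
Proof. by apply: I_val_inj; rewrite tadd_val I0_val addr0; apply/min_idPl/I_le1. Qed.

Lemma tadd0r t : tadd (I0 R) t = t.
Proof. by apply: I_val_inj; rewrite tadd_val I0_val add0r; apply/min_idPl/I_le1. Qed.

Lemma taddC p q : tadd p q = tadd q p.
Proof. by apply: I_val_inj; rewrite !tadd_val addrC. Qed.

Lemma taddA p q r : tadd p (tadd q r) = tadd (tadd p q) r.
Proof.
apply: I_val_inj; rewrite !tadd_val.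
have := I_ge0 p; have := I_ge0 q; have := I_ge0 r; minmax_lra.
Qed.

Lemma tadd_le p q : sval (tadd p q) <= sval p + sval q.
Proof. by rewrite tadd_val ge_min lexx. Qed.

Lemma le_tadd x p q : x <= 1 -> x <= sval p + sval q -> x <= sval (tadd p q).
Proof. by move=> x1 xpq; rewrite tadd_val le_min x1 xpq. Qed.

Lemma tadd_ler p q : sval p <= sval (tadd q p).
Proof. by apply: le_tadd; [apply: I_le1 | have := I_ge0 q; lra]. Qed.

Lemma le_tadd_clampI y x p : 0 <= x -> y <= 1 -> y <= sval p + x ->
  y <= sval (tadd p (clampI x)).
Proof.
move=> x0 y1 ypx; apply: le_tadd => //=; rewrite (max_idPl x0).
by have := I_ge0 p; minmax_lra.
Qed.

Lemma tadd_mono p q r s : sval p <= sval q -> sval r <= sval s ->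
  sval (tadd p r) <= sval (tadd q s).
Proof. by move=> pq rs; rewrite !tadd_val; minmax_lra. Qed.

Lemma tsub_mono p q r : sval p <= sval q -> sval (tsub p r) <= sval (tsub q r).
Proof. by move=> pq; rewrite !tsub_val; minmax_lra. Qed.

Lemma tsubK_le p r : sval p <= sval (tadd (tsub p r) r).
Proof.
rewrite tadd_val tsub_val.
have := I_le1 p; have := I_ge0 r; minmax_lra.
Qed.

Lemma taddK_le p r : sval (tsub (tadd p r) r) <= sval p.
Proof.
rewrite tsub_val tadd_val.
have := I_ge0 p; have := I_ge0 r; minmax_lra.
Qed.

Lemma tsubK p r : sval r <= sval p -> tadd (tsub p r) r = p.
Proof.
move=> rp; apply: I_val_inj; rewrite tadd_val tsub_val.
have := I_le1 p; minmax_lra.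
Qed.

Lemma taddK p r : sval p + sval r <= 1 -> tsub (tadd p r) r = p.
Proof.
move=> pr1; apply: I_val_inj; rewrite tsub_val tadd_val.
have := I_ge0 p; minmax_lra.
Qed.

End TruncatedArithmetic.

Section UnitIntervalMaps.
Variable R : realType.
Implicit Types (u : Umap R) (p q r t x y : I R).

Lemma Umap0 u : sval (u (I0 R)) = 0.
Proof.
have [x ux0] := ufun_surj u (I0 R).
apply/le_anti; rewrite I_ge0 andbT.
have: sval (u (I0 R)) <= sval (u x) by apply: ufun_mono; rewrite I0_val I_ge0.
by rewrite ux0 I0_val.
Qed.

Lemma Umap1 u : sval (u (I1 R)) = 1.
Proof.
have [x ux1] := ufun_surj u (I1 R).
apply/le_anti; rewrite I_le1 /=.
have: sval (u x) <= sval (u (I1 R)) by apply: ufun_mono; rewrite I1_val I_le1.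
by rewrite ux1 I1_val.
Qed.

Lemma Umap_lt u p q : sval (u p) < sval (u q) -> sval p < sval q.
Proof. by apply: contraTT; rewrite -!leNgt => /(ufun_mono u). Qed.

Lemma Umap_le0 u p q : sval p <= sval q -> sval (u q) = 0 -> u p = u q.
Proof.
move=> pq uq0; apply: I_val_inj; apply/le_anti.
by rewrite (ufun_mono u pq) uq0 I_ge0.
Qed.

Lemma Umap_ge1 u p q : sval q <= sval p -> sval (u q) = 1 -> u p = u q.
Proof.
move=> qp uq1; apply: I_val_inj; apply/le_anti.
by rewrite (ufun_mono u qp) andbT uq1 I_le1.
Qed.

Section Shift.
Variables (u : Umap R) (r : I R).

Lemma shift_mono p q : sval p <= sval q -> sval (u (tadd p r)) <= sval (u (tadd q r)).
Proof. by move=> pq; apply/ufun_mono/tadd_mono. Qed.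

Lemma unshift_mono p q : sval p <= sval q -> sval (u (tsub p r)) <= sval (u (tsub q r)).
Proof. by move=> pq; apply/ufun_mono/tsub_mono. Qed.

Hypothesis ur0 : sval (u r) = 0.

Lemma shift_surj y : exists x, u (tadd x r) = y.
Proof.
have [x <-] := ufun_surj u y.
case: (leP (sval r) (sval x)) => [rx | /ltW xr]; first by exists (tsub x r); rewrite tsubK.
by exists (I0 R); rewrite tadd0r (Umap_le0 xr ur0).
Qed.

Definition shiftU : Umap R := UMap shift_mono shift_surj.

End Shift.

Section Unshift.
Variables (u : Umap R) (r : I R).
Hypothesis u1r1 : sval (u (tsub (I1 R) r)) = 1.

Lemma unshift_surj y : exists x, u (tsub x r) = y.
Proof.
have [x <-] := ufun_surj u y.
case: (leP (sval x + sval r) 1) => [xr1 | xr1]; first by exists (tadd x r); rewrite taddK.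
exists (I1 R); rewrite (@Umap_ge1 u x (tsub (I1 R) r)) //.
by rewrite tsub_val I1_val; have := I_ge0 x; minmax_lra.
Qed.

Definition unshiftU : Umap R := UMap (unshift_mono u r) unshift_surj.

End Unshift.

Lemma finite_pos_lbound (n : nat) (g : nat -> R) :
  (forall j, (j < n)%N -> 0 < g j) ->
  exists2 d : R, 0 < d & forall j, (j < n)%N -> d <= g j.
Proof.
elim: n => [|n IHn] g_gt0; first by exists 1.
have [d d_gt0 dg] := IHn (fun j jn => g_gt0 j (ltnW jn)).
exists (Num.min d (g n)); first by rewrite lt_min d_gt0 g_gt0.
move=> j; rewrite ltnS leq_eqVlt => /predU1P[-> | jn].
  by rewrite ge_min lexx orbT.
by rewrite ge_min dg.
Qed.

(* Pick [x_j] with [u x_j = j/N]: the [x_j] increase strictly, and any step of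
   length at most their least gap raises [u] by at most [2/N]. *)
Lemma Umap_unif_cont u (e : R) : 0 < e ->
  exists2 d : R, 0 < d & forall t y, sval y <= sval t + d -> sval (u y) <= sval (u t) + e.
Proof.
move=> e_gt0.
pose N := (Num.truncn (2 / e)).+1.
pose h : R := N%:R^-1.
have N_gt0 : (0 : R) < N%:R by rewrite ltr0Sn.
have Nh : N%:R * h = 1 by rewrite mulfV ?gt_eqF.
have h_gt0 : 0 < h by rewrite invr_gt0.
have h2e : 2 * h < e.
  have two_e_gt0 : 0 < 2 / e by rewrite divr_gt0.
  have /andP[_] := truncn_itv (ltW two_e_gt0).
  by rewrite -/N ltr_pdivrMr // -(ltr_pM2r h_gt0) mulrAC Nh mul1r.
have [x ux] : exists x : nat -> I R, forall j, (j <= N)%N -> sval (u (x j)) = j%:R * h.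
  have [x ux] := choice (fun j : nat => ufun_surj u (clampI (j%:R * h))).
  exists x => j jN; rewrite ux clampI_id //; first by rewrite mulr_ge0 ?ler0n ?(ltW h_gt0).
  by rewrite -[leRHS]Nh ler_pM2r // ler_nat.
have [d d_gt0 dx] : exists2 d : R, 0 < d &
    forall j, (j < N)%N -> d <= sval (x j.+1) - sval (x j).
  apply: finite_pos_lbound => j jN; rewrite subr_gt0; apply: (@Umap_lt u).
  by rewrite !ux ?(ltnW jN) // ltr_pM2r // ltr_nat.
exists d => // t y ty.
pose j := Num.truncn (sval (u t) * N%:R).
have /andP[jt tj] := truncn_itv (mulr_ge0 (I_ge0 (u t)) (ltW N_gt0)).
have jh : j%:R * h <= sval (u t).
  by move: jt; rewrite -(ler_pM2r h_gt0) -mulrA Nh mulr1.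
have tjh : sval (u t) < j.+1%:R * h.
  by move: tj; rewrite -(ltr_pM2r h_gt0) -mulrA Nh mulr1.
case: (ltnP j.+1 N) => jN.
  have tx : sval t < sval (x j.+1) by apply: (@Umap_lt u); rewrite ux // ltnW.
  have yx : sval y <= sval (x j.+2) by have := dx j.+1 jN; lra.
  by have := ufun_mono u yx; rewrite ux // -addn2 natrD mulrDl; lra.
have : (N%:R - 1) * h <= j%:R * h by rewrite ler_pM2r // lerBlDr natr1 ler_nat.
rewrite mulrBl Nh mul1r; have := I_le1 (u y); lra.
Qed.

Lemma uadj_ge u x y : sval (u x) <= sval y -> sval x <= sval (uadj u y).
Proof.
move=> uxy; rewrite /= le_min I_le1 andbT le_max; apply/orP; left.
by apply: ub_le_sup; [exists 1 => _ [z _ <-]; apply: I_le1 | exists x].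
Qed.

Lemma uadj1 u : sval (uadj u (I1 R)) = 1.
Proof. by apply/le_anti; rewrite I_le1 -{1}(I1_val R) uadj_ge // Umap1 I1_val. Qed.

End UnitIntervalMaps.

Section IntervalBounds.
Variable R : realType.
Implicit Types (S : set R) (x z : R).

Lemma Isup_ub S z : has_ubound S -> S z -> z <= Isup S.
Proof.
move=> ubS Sz; rewrite /Isup; destruct pselect as [S0 | SN] => /=; last exact: ub_le_sup.
by move: Sz; rewrite S0.
Qed.

Lemma Isup_ge0 S : has_ubound S -> (forall z, S z -> 0 <= z) -> 0 <= Isup S.
Proof.
move=> ubS S_ge0; rewrite /Isup; destruct pselect as [S0 | SN] => //=.
have /eqP/set0P[z Sz] := SN.
exact: le_trans (S_ge0 z Sz) (ub_le_sup ubS Sz).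
Qed.

Lemma Iinf_glb S x : x <= 1 -> (forall z, S z -> x <= z) -> x <= Iinf S.
Proof.
move=> x1 lbS; rewrite /Iinf; destruct pselect as [S0 | SN] => //=.
by apply: lb_le_inf => //; apply/set0P/eqP.
Qed.

End IntervalBounds.

Section RDistance.
Variables (R : realType) (A : Type) (le : A -> A -> Prop) (act : Umap R -> A -> A).
Hypothesis HA : is_Uposet le act.

Let leAxx : forall a, le a a. Proof. by case: HA => [[]]. Qed.
Let leA_trans : forall a b c, le a b -> le b c -> le a c.
Proof. by case: HA => [[_ []]]. Qed.
Let act_id : forall a, act (idU R) a = a. Proof. by case: HA => _ []. Qed.
Let act_comp : forall u v a, act (compU u v) a = act u (act v a).
Proof. by case: HA => _ [_ []]. Qed.
Let act_monoU : forall (u v : Umap R) a,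
  (forall t, sval (u t) <= sval (v t)) -> le (act u a) (act v a).
Proof. by case: HA => _ [_ [_ []]]. Qed.
Let act_mono : forall u a b, le a b -> le (act u a) (act u b).
Proof. by case: HA => _ [_ [_ []]]. Qed.

Local Notation ler := (le_r le act).
Local Notation rh := (rho le act).

Lemma le_r_mono (r s : I R) a b : sval r <= sval s -> ler r a b -> ler s a b.
Proof.
move=> rs hab u v uv; apply: hab => t.
by apply: le_trans (uv t); apply/ufun_mono/tadd_mono.
Qed.

Lemma le_r0 a b : ler (I0 R) a b <-> le a b.
Proof.
split=> [hab | hab u v uv].
  by rewrite -(act_id a) -(act_id b); apply: hab => t; rewrite taddr0.
apply: leA_trans (act_mono v hab); apply: act_monoU => t.
by have := uv t; rewrite taddr0.
Qed.

(* [u r = 0], so [t |-> u (t (+) r)] is in [U]; it interpolates between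
   [u] and [v]. *)
Lemma le_r_trans r s a b c : ler r a b -> ler s b c -> ler (tadd r s) a c.
Proof.
move=> hab hbc u v uv.
have ur0 : sval (u r) = 0.
  apply/le_anti; rewrite I_ge0 andbT -(Umap0 v).
  apply: le_trans (uv (I0 R)); apply: ufun_mono.
  by rewrite tadd0r taddC tadd_ler.
apply: leA_trans (hab u (shiftU ur0) _) _ => [t // |].
by apply: hbc => t /=; rewrite -taddA (taddC s r).
Qed.

Lemma le_r1 a b : ler (I1 R) a b.
Proof.
move=> u v uv; exfalso; have := uv (I0 R).
by rewrite tadd0r Umap1 Umap0 ler10.
Qed.

Lemma le_r_vals1 a b : [set sval r | r in [set r | ler r a b]] 1.
Proof. by exists (I1 R); [apply: le_r1 | apply: I1_val]. Qed.

Lemma rho_val a b : sval (rh a b) = inf [set sval r | r in [set r | ler r a b]].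
Proof.
rewrite /rho /Iinf; set S := [set sval r | r in _].
have S1 : S 1 := le_r_vals1 a b.
have lbS : lbound S 0 by move=> _ [r _ <-]; apply: I_ge0.
destruct pselect as [S0 | SN] => /=; first by move: S1; rewrite S0.
apply: clampI_id; first exact: lb_le_inf (ex_intro _ 1 S1) lbS.
by apply: ge_inf S1; exists 0.
Qed.

Lemma rho_le r a b : ler r a b -> sval (rh a b) <= sval r.
Proof.
move=> hab; rewrite rho_val; apply: ge_inf; last by exists r.
by exists 0 => _ [p _ <-]; apply: I_ge0.
Qed.

Lemma le_r_rho_lt r a b : sval (rh a b) < sval r -> ler r a b.
Proof.
rewrite rho_val => /inf_lt[]; first by exists 1; apply: le_r_vals1.
by move=> _ [p hp <-] /ltW pr; apply: le_r_mono hp.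
Qed.

Lemma le_r_rho_add a b (d : R) : 0 < d -> ler (clampI (sval (rh a b) + d)) a b.
Proof.
move=> d_gt0; have := I_ge0 (rh a b); have := I_le1 (rh a b) => rho1 rho0.
case: (leP (sval (rh a b) + d) 1) => [rd1 | rd1].
  by apply: le_r_rho_lt; rewrite (clampI_id (x := _ + d)); lra.
by apply: le_r_mono (le_r1 a b); rewrite I1_val le_clampI // ltW.
Qed.

Lemma rho_le_of a b (x : R) : 0 <= x -> (forall r, x < sval r -> ler r a b) ->
  sval (rh a b) <= x.
Proof.
move=> x_ge0 hx; apply/ler_addgt0Pr => e e_gt0.
case: (leP (x + e) 1) => [xe1 | xe1]; last by have := I_le1 (rh a b); lra.
have xe : sval (clampI (x + e)) = x + e by rewrite clampI_id // addr_ge0 // ltW.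
by rewrite -xe; apply: rho_le; apply: hx; rewrite xe ltrDl.
Qed.

Lemma rho_of_le a b : le a b -> sval (rh a b) = 0.
Proof.
move=> hab; apply/le_anti; rewrite I_ge0 andbT -(I0_val R).
by apply: rho_le; apply/le_r0.
Qed.

Lemma rho_triangle a b c : sval (rh a c) <= sval (rh a b) + sval (rh b c).
Proof.
rewrite -lerBlDr [leRHS]rho_val; apply: lb_le_inf.
  by exists 1; apply: le_r_vals1.
move=> _ [r hab <-]; rewrite lerBlDr -lerBlDl [leRHS]rho_val; apply: lb_le_inf.
  by exists 1; apply: le_r_vals1.
move=> _ [s hbc <-]; rewrite lerBlDl.
exact: le_trans (rho_le (le_r_trans hab hbc)) (tadd_le _ _).
Qed.

Lemma rhoxx a : sval (rh a a) = 0.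
Proof. exact: rho_of_le. Qed.

Local Notation dist := (dist le act).

Lemma distxx a : dist a a = 0.
Proof. by rewrite /dist rhoxx maxxx. Qed.

Lemma distC a b : dist a b = dist b a.
Proof. exact: maxC. Qed.

Lemma dist_triangle a b c : dist a c <= dist a b + dist b c.
Proof.
rewrite /dist ge_max; apply/andP; split.
  by apply: le_trans (rho_triangle a b c) _; apply: lerD; rewrite le_max lexx.
apply: le_trans (rho_triangle c b a) _; rewrite addrC.
by apply: lerD; rewrite le_max lexx orbT.
Qed.

Lemma le_r_act r s (u v : Umap R) a b :
  (forall t, sval (u (tadd t r)) <= sval (tadd (v t) s)) ->
  ler r a b -> ler s (act u a) (act v b).
Proof.
move=> uv hab u' v' uv'; rewrite -!act_comp; apply: hab => t /=.
exact/(le_trans _ (uv' (v t)))/ufun_mono.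
Qed.

Lemma rho_act_sup (u v : Umap R) a :
  sval (rh (act u a) (act v a)) <= Isup (range (fun t => sval (tsub (u t) (v t)))).
Proof.
set M := Isup _.
have M_ub t : sval (tsub (u t) (v t)) <= M.
  by apply: Isup_ub; [exists 1 => _ [p _ <-]; apply: I_le1 | exists t].
have M_ge0 : 0 <= M := le_trans (I_ge0 _) (M_ub (I0 R)).
apply: le_trans (clampI_le M_ge0); apply: rho_le.
apply: (@le_r_act (I0 R)); last exact/le_r0/leAxx.
move=> t; rewrite taddr0; apply: le_tadd_clampI => //; first exact: I_le1.
by have := M_ub t; rewrite tsub_val; minmax_lra.
Qed.

(* [mu] need not be monotone, so it may only be evaluated at [rho a b] itself:
   step from [t (+) r] down by exactly [rho a b], and absorb the slack
   [r - rho a b] by uniform continuity of [u]. *)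
Lemma rho_act_modulus (u : Umap R) (mu : I R -> I R) :
  (forall t t', sval (tsub (u t) (u t')) <= sval (mu (tsub t t'))) ->
  forall a b, sval (rh (act u a) (act u b)) <= sval (mu (rh a b)).
Proof.
move=> u_mu a b; set p := rh a b.
apply/ler_addgt0Pr => e e_gt0.
have [d d_gt0 u_d] := Umap_unif_cont u e_gt0.
set r := clampI (sval p + d).
have rpd : sval r <= sval p + d by rewrite clampI_le // addr_ge0 ?I_ge0 ?ltW.
have pr : sval p <= sval r by rewrite le_clampI ?I_le1 // lerDl ltW.
have mu_ge0 : 0 <= sval (mu p) + e by rewrite addr_ge0 ?I_ge0 ?ltW.
apply: le_trans (clampI_le mu_ge0); apply: rho_le.
apply: (le_r_act _ (le_r_rho_add d_gt0)) => t.
set x := tadd t r.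
have px : sval p <= sval x := le_trans pr (tadd_ler _ _).
set y := clampI (sval x - sval p).
have y_val : sval y = sval x - sval p by rewrite clampI_id; have := I_le1 x; have := I_ge0 p; lra.
have xyp : tsub x y = p by apply: I_val_inj; rewrite tsub_val y_val opprB addrC subrK max_l ?I_ge0.
have uyt : sval (u y) <= sval (u t) + e by apply: u_d; have := tadd_le t r; lra.
apply: le_tadd_clampI => //; first exact: I_le1.
by have := u_mu x y; rewrite xyp tsub_val; minmax_lra.
Qed.

(* With [w t := v' (v (t (-) r))], which lies in [U] because [v' (v (1 (-) r)) = 1],
   the hypothesis on [u^x] gives [u' <= w \o u], and [u a <=_r b] then gives
   [w (u a) <= v' (v b)]. *)
Lemma le_r_adj r s (u v : Umap R) a b :
  (forall t, sval (uadj u (tadd t r)) <= sval (tadd (v t) s)) ->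
  ler r (act u a) b -> ler s a (act v b).
Proof.
move=> uv hab u' v' uv'.
have v'v1 : sval (compU v' v (tsub (I1 R) r)) = 1.
  have v'1 : 1 <= sval (v' (tsub (I1 R) s)).
    by have := uv' (tsub (I1 R) s); rewrite tsubK ?I1_val ?I_le1 // Umap1.
  have v1s : sval (tsub (I1 R) s) <= sval (v (tsub (I1 R) r)).
    have := uv (tsub (I1 R) r); rewrite tsubK ?I1_val ?I_le1 // uadj1 tsub_val tadd_val I1_val.
    by have := I_ge0 (v (tsub (I1 R) r)); minmax_lra.
  by apply/le_anti; rewrite I_le1 (le_trans v'1 (ufun_mono v' v1s)).
apply: leA_trans (@act_monoU u' (compU (unshiftU v'v1) u) a _) _ => [x /= |].
  apply: le_trans (ufun_mono u' (tsubK_le x s)) _; apply: le_trans (uv' _) _.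
  apply: ufun_mono; have := le_trans (uadj_ge (tsubK_le (u x) r)) (uv _).
  by rewrite tsub_val tadd_val; have := I_ge0 (v (tsub (u x) r)); minmax_lra.
rewrite act_comp -[act v' _]act_comp; apply: hab => t /=.
exact/ufun_mono/ufun_mono/taddK_le.
Qed.

Section Meets.
Variable Psi : PosetClass.
Hypothesis HPsi : is_Uinflattice Psi le act.

Lemma le_r_glb (psi : A -> Prop) m r a : opsubposet_in Psi le psi -> is_glb le psi m ->
  ler r a m <-> (forall b, psi b -> ler r a b).
Proof.
move=> psi_op glb_m; have [lb_m _] := glb_m; split=> [ham b psi_b u v uv | hpsi u v uv].
  exact: leA_trans (ham u v uv) (act_mono v (lb_m b psi_b)).
have [_ [_ act_glb]] := HPsi.
by apply: (proj2 (act_glb v psi m psi_op glb_m)) => _ [b psi_b ->]; apply: hpsi.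
Qed.

Lemma rho_glb (psi psi' : A -> Prop) m m' :
  opsubposet_in Psi le psi -> is_glb le psi m ->
  opsubposet_in Psi le psi' -> is_glb le psi' m' ->
  sval (rh m m') <= Iinf [set Isup [set sval (rh a b) | b in psi'] | a in psi].
Proof.
move=> psi_op [lb_m _] psi'_op glb_m'.
apply: Iinf_glb => [| _ [a psi_a <-]]; first exact: I_le1.
have ubS : has_ubound [set sval (rh a b) | b in psi'] by exists 1 => _ [b _ <-]; apply: I_le1.
apply: le_trans (rho_triangle m a m') _; rewrite (rho_of_le (lb_m a psi_a)) add0r.
apply: rho_le_of => [| r supr]; first by apply: Isup_ge0 => // _ [b _ <-]; apply: I_ge0.
apply/(le_r_glb _ _ psi'_op glb_m') => b psi'_b; apply: le_r_rho_lt.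
by apply: le_lt_trans supr; apply: Isup_ub => //; exists b.
Qed.

End Meets.

End RDistance.

Theorem lemma4p6 (R : realType) (Phi Psi : PosetClass)
  (HPhi : join_doctrine Phi) (HPsi : join_doctrine Psi)
  (Homega : Phi nat (fun m n => (m <= n)%N))
  (Hdual : sound_dual Phi Psi)
  (A : Type) (le : A -> A -> Prop) (act : Umap R -> A -> A)
  (HA : is_Uposet le act) :
  (* (a) *)
  (forall (r s : I R) (a b : A),
     sval r <= sval s -> le_r le act r a b -> le_r le act s a b) /\
  (* (b) *)
  (forall a b : A, le_r le act (I0 R) a b <-> le a b) /\
  (* (c) *)
  (forall (r s : I R) (a b c : A),
     le_r le act r a b -> le_r le act s b c -> le_r le act (tadd r s) a c) /\
  (* (d) rho is a pseudoquasimetric, dist a pseudometric *)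
  (forall a b c : A,
     sval (rho le act a a) = 0 /\
     sval (rho le act a c) <= sval (rho le act a b) + sval (rho le act b c)) /\
  (forall a b c : A,
     dist le act a a = 0 /\ dist le act a b = dist le act b a /\
     dist le act a c <= dist le act a b + dist le act b c) /\
  (* (e) *)
  (forall (r s : I R) (u v : Umap R) (a b : A),
     (forall t : I R, sval (u (tadd t r)) <= sval (tadd (v t) s)) ->
     le_r le act r a b -> le_r le act s (act u a) (act v b)) /\
  (forall (u v : Umap R) (a : A),
     sval (rho le act (act u a) (act v a))
       <= Isup (range (fun t : I R => sval (tsub (u t) (v t))))) /\
  (forall (u : Umap R) (mu : I R -> I R),
     (forall t t' : I R, sval (tsub (u t) (u t')) <= sval (mu (tsub t t'))) ->
     forall a b : A,
       sval (rho le act (act u a) (act u b)) <= sval (mu (rho le act a b))) /\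
  (* (f) *)
  (forall (r s : I R) (u v : Umap R) (a b : A),
     (forall t : I R, sval (uadj u (tadd t r)) <= sval (tadd (v t) s)) ->
     le_r le act r (act u a) b -> le_r le act s a (act v b)) /\
  (* (g) *)
  (is_Uinflattice Psi le act ->
     (forall (psi : A -> Prop) (m : A),
        is_upper le psi -> opsubposet_in Psi le psi -> is_glb le psi m ->
        forall (r : I R) (a : A),
          le_r le act r a m <-> (forall b, psi b -> le_r le act r a b)) /\
     (forall (psi psi' : A -> Prop) (m m' : A),
        is_upper le psi -> opsubposet_in Psi le psi -> is_glb le psi m ->
        is_upper le psi' -> opsubposet_in Psi le psi' -> is_glb le psi' m' ->
        sval (rho le act m m')
          <= Iinf [set Isup [set sval (rho le act a b) | b in psi'] | a in psi])).
Proof.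
split; first exact: le_r_mono.
split; first exact: le_r0 HA.
split; first exact: le_r_trans HA.
split; first by move=> a b c; split; [exact: rhoxx HA a | exact: rho_triangle HA a b c].
split; first by move=> a b c; split; [|split]; [exact: distxx HA a | exact: distC | exact: dist_triangle HA a b c].
split; first exact: le_r_act HA.
split; first exact: rho_act_sup HA.
split; first exact: rho_act_modulus HA.
split; first exact: le_r_adj HA.
move=> HPsi'; split=> [psi m _ psi_op glb_m r a | psi psi' m m' _ psi_op glb_m _ psi'_op glb_m'].
  exact (le_r_glb HA HPsi' r a psi_op glb_m).
exact (rho_glb HA HPsi' psi_op glb_m psi'_op glb_m').
Qed.
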